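(* Let $(E\to M,\rho,\langle\cdot,\cdot\rangle,\circ)$ be a Courant algebroid and let $\mathbf I,\mathbf J$ be vector bundle endomorphisms of $E$ over $\mathrm{id}_M$ such that $\mathbf I^2=\mathbf J^2=-1$, $\mathbf I\mathbf J=-\mathbf J\mathbf I$, both $\mathbf I$ and $\mathbf J$ are orthogonal for $\langle\cdot,\cdot\rangle$, and $N_{\mathbf I,\mathbf I}=N_{\mathbf J,\mathbf J}=N_{\mathbf I,\mathbf J}=0$. Then $(\mathbf I,\mathbf J,\mathbf I\mathbf J)$ is a hypercomplex structure on $E$.
   Context: A Courant algebroid $(E\to M,\rho,\langle\cdot,\cdot\rangle,\circ)$ consists of a real vector bundle $E\to M$ over a smooth manifold, a nondegenerate symmetric fiberwise bilinear pairing $\langle\cdot,\cdot\rangle$ on $E$, a vector bundle map $\rho:E\to TM$ (the anchor), and an $\mathbb R$-bilinear operation $\circ$ on $\Gamma(E)$ (the Dorfman bracket) such that for all $f\in C^\infty(M)$, $x,y,z\in\Gamma(E)$: $x\circ(y\circ z)=(x\circ y)\circ z+y\circ(x\circ z)$; $\rho(x\circ y)=[\rho(x),\rho(y)]$; $x\circ(fy)=(\rho(x)f)y+f(x\circ y)$; $x\circ y+y\circ x=2D\langle x,y\rangle$; $(Df)\circ x=0$; $\rho(x)\langle y,z\rangle=\langle x\circ y,z\rangle+\langle y,x\circ z\rangle$. Here $D:C^\infty(M)\to\Gamma(E)$ is the $\mathbb R$-linear map defined by $\langle Df,x\rangle=\tfrac12\rho(x)f$. For vector bundle endomorphisms $F,G$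 of $E$ (over $\mathrm{id}_M$), the Nijenhuis concomitant is the tensor $N_{F,G}:E\otimes E\to E$ given by $N_{F,G}(X,Y)=FX\circ GY-F(X\circ GY)-G(FX\circ Y)+FG(X\circ Y)+GX\circ FY-G(X\circ FY)-F(GX\circ Y)+GF(X\circ Y)$. An almost hypercomplex structure on $E$ is a triple $(\mathbf I,\mathbf J,\mathbf K)$ of vector bundle endomorphisms of $E$ over $\mathrm{id}_M$, each orthogonal for $\langle\cdot,\cdot\rangle$, with $\mathbf I^2=\mathbf J^2=\mathbf K^2=\mathbf I\mathbf J\mathbf K=-1$. It is a hypercomplex structure if $N_{\mathbf I,\mathbf I},N_{\mathbf J,\mathbf J},N_{\mathbf K,\mathbf K},N_{\mathbf I,\mathbf J},N_{\mathbf J,\mathbf K},N_{\mathbf K,\mathbf I}$ all vanish. *)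

From HB Require Import structures.
From mathcomp Require Import all_boot all_order all_algebra.
Set Implicit Arguments. Unset Strict Implicit. Unset Printing Implicit Defensive.
Import Order.TTheory GRing.Theory Num.Theory.
Local Open Scope ring_scope.

(* R      : the real scalars (any real field),
   C      : the commutative R-algebra of smooth functions C^oo(M),
   V      : the C-module of sections Gamma(E).
   A Courant algebroid is given at the level of sections by:
   anchor rho : V -> (C -> C) (each rho x is a vector field = R-derivation of C),
   pairing  <.,.> : V -> V -> C (C-bilinear, symmetric, nondegenerate),
   Dorfman bracket  o : V -> V -> V (R-bilinear),
   D : C -> V  with <Df, x> = 1/2 rho(x) f. *)
Record courant_data (R : realFieldType) (C : comAlgType R) (V : lmodType C) := CourantData {
  anchor : V -> C -> C;
  pairing : V -> V -> C;
  dorf : V -> V -> V;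
  Dop : C -> V
}.

Section Defs.
Variables (R : realFieldType) (C : comAlgType R) (V : lmodType C).
Variable c : courant_data V.

Local Notation rho := (anchor c).
Local Notation pr := (pairing c).
Local Notation "x <o> y" := (dorf c x y) (at level 40, left associativity).
Local Notation D := (Dop c).

Definition vf_bracket (X Y : C -> C) : C -> C := fun f => X (Y f) - Y (X f).

Definition courant_axioms : Prop :=
  (forall (f : C) x y g, rho (f *: x + y) g = f * rho x g + rho y g) /\
  (forall x (r : R) g h, rho x (r *: g + h) = r *: rho x g + rho x h) /\
  (forall x g h, rho x (g * h) = rho x g * h + g * rho x h) /\
  (forall (f : C) x y z, pr (f *: x + y) z = f * pr x z + pr y z) /\
  (forall x y, pr x y = pr y x) /\
  (forall x, (forall y, pr x y = 0) -> x = 0) /\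
  (forall (r : R) x y z, (r%:A *: x + y) <o> z = r%:A *: (x <o> z) + y <o> z) /\
  (forall (r : R) x y z, x <o> (r%:A *: y + z) = r%:A *: (x <o> y) + x <o> z) /\
  (forall f x, pr (D f) x = (2%:R : R)^-1 *: rho x f) /\
  (forall x y z, x <o> (y <o> z) = (x <o> y) <o> z + y <o> (x <o> z)) /\
  (forall x y, rho (x <o> y) =1 vf_bracket (rho x) (rho y)) /\
  (forall (f : C) x y, x <o> (f *: y) = rho x f *: y + f *: (x <o> y)) /\
  (forall x y, x <o> y + y <o> x = D (pr x y) *+ 2) /\
  (forall f x, D f <o> x = 0) /\
  (forall x y z, rho x (pr y z) = pr (x <o> y) z + pr y (x <o> z)).

(* vector bundle endomorphisms of E over id_M = C-linear maps of sections *)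
Definition bundle_endo (F : V -> V) : Prop :=
  forall (f : C) x y, F (f *: x + y) = f *: F x + F y.

Definition ca_orthogonal (F : V -> V) : Prop := forall x y, pr (F x) (F y) = pr x y.

Definition nijenhuis (F G : V -> V) (X Y : V) : V :=
  F X <o> G Y - F (X <o> G Y) - G (F X <o> Y) + F (G (X <o> Y))
  + G X <o> F Y - G (X <o> F Y) - F (G X <o> Y) + G (F (X <o> Y)).

Definition nij_zero (F G : V -> V) : Prop := forall X Y, nijenhuis F G X Y = 0.

Definition almost_hypercomplex (I J K : V -> V) : Prop :=
  [/\ [/\ bundle_endo I, bundle_endo J & bundle_endo K],
      [/\ ca_orthogonal I, ca_orthogonal J & ca_orthogonal K] &
      [/\ (forall x, I (I x) = - x), (forall x, J (J x) = - x),
          (forall x, K (K x) = - x) & (forall x, I (J (K x)) = - x)]].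

Definition hypercomplex (I J K : V -> V) : Prop :=
  almost_hypercomplex I J K /\
  [/\ [/\ nij_zero I I, nij_zero J J & nij_zero K K] &
      [/\ nij_zero I J, nij_zero J K & nij_zero K I]].

End Defs.

From HB Require Import structures.
From mathcomp Require Import all_boot all_order all_algebra.
Set Implicit Arguments. Unset Strict Implicit. Unset Printing Implicit Defensive.
Import Order.TTheory GRing.Theory Num.Theory.
Local Open Scope ring_scope.

(* Only the additive structure matters: we never use the Courant axioms beyond
   the biadditivity of the Dorfman bracket.  Put K := IJ.  For any biadditive
   bracket and any additive I, J with I^2 = J^2 = -1 and IJ = -JI, each of
   2 N_{K,K}, 4 N_{J,K} and 4 N_{K,I} is an explicit Z-linear combination of
   values of N_{I,I} and N_{J,J}, possibly composed with I, J or K (the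
   identities nijenhuis_KK, nijenhuis_JK, nijenhuis_KI).  They are checked by
   expanding everything by additivity and I^2 = J^2 = -1, JI = -IJ, and then
   normalizing in the free abelian group on the remaining atoms; a small
   reflexive decision procedure for abelian-group identities does the latter.
   Hence N_{I,I} = N_{J,J} = 0 forces 2 N_{K,K} = 4 N_{J,K} = 4 N_{K,I} = 0,
   and since the sections form a module over an algebra over a field of
   characteristic zero, N_{K,K} = N_{J,K} = N_{K,I} = 0.  The algebraic
   conditions on K (orthogonality, C-linearity, K^2 = IJK = -1) are direct. *)

(* Deciding identities in abelian groups by reflection: a term over atoms
   0, 1, 2, ... is sent to its vector of integer coefficients, and a term
   whose coefficients all vanish evaluates to 0 in every abelian group. *)
Inductive zterm := ZAtom of nat | ZAdd of zterm & zterm | ZOpp of zterm | ZZero.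

Section AbelianGroupReflection.
Variable V : zmodType.

Fixpoint zeval (env : seq V) (t : zterm) : V :=
  match t with
  | ZAtom n => nth 0 env n
  | ZAdd t1 t2 => zeval env t1 + zeval env t2
  | ZOpp t1 => - zeval env t1
  | ZZero => 0
  end.

Fixpoint coef_add (u v : seq int) : seq int :=
  match u, v with
  | [::], _ => v
  | _, [::] => u
  | a :: u', b :: v' => (a + b) :: coef_add u' v'
  end.

Fixpoint coef_atom (n : nat) : seq int :=
  if n is n'.+1 then 0 :: coef_atom n' else [:: 1].

Fixpoint coefs (t : zterm) : seq int :=
  match t with
  | ZAtom n => coef_atom n
  | ZAdd t1 t2 => coef_add (coefs t1) (coefs t2)
  | ZOpp t1 => map -%R (coefs t1)
  | ZZero => [::]
  end.

Fixpoint coef_eval (env : seq V) (v : seq int) : V :=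
  match v with
  | [::] => 0
  | a :: v' => head 0 env *~ a + coef_eval (behead env) v'
  end.

Lemma coef_eval_add env u v :
  coef_eval env (coef_add u v) = coef_eval env u + coef_eval env v.
Proof.
elim: u env v => [|a u IHu] env [|b v] /=; rewrite ?add0r ?addr0 //.
by rewrite IHu mulrzDr addrACA.
Qed.

Lemma coef_eval_opp env u : coef_eval env (map -%R u) = - coef_eval env u.
Proof. by elim: u env => [|a u IHu] env /=; rewrite ?oppr0 // IHu mulrNz opprD. Qed.

Lemma coef_eval_atom env n : coef_eval env (coef_atom n) = nth 0 env n.
Proof.
elim: n env => [|n IHn] [|x env] /=; rewrite ?addr0 ?mulr0z ?add0r ?IHn //.
by rewrite nth_nil.
Qed.

Lemma coefsE env t : zeval env t = coef_eval env (coefs t).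
Proof.
elim: t => [n|t1 IH1 t2 IH2|t1 IH1|] //=.
- by rewrite coef_eval_atom.
- by rewrite coef_eval_add IH1 IH2.
- by rewrite coef_eval_opp IH1.
Qed.

Lemma zeval_eq0 env t : all (eq_op^~ 0) (coefs t) -> zeval env t = 0.
Proof.
rewrite coefsE; elim: (coefs t) env => [|a v IHv] env //= /andP[/eqP -> v0].
by rewrite mulr0z add0r IHv.
Qed.

End AbelianGroupReflection.

Ltac zmem x env :=
  lazymatch env with
  | nil => constr:(false)
  | cons x _ => constr:(true)
  | cons _ ?env' => zmem x env'
  end.

Ltac zatoms t env :=
  lazymatch t with
  | @GRing.add _ ?a ?b => let env' := zatoms a env in zatoms b env'
  | @GRing.opp _ ?a => zatoms a env
  | @GRing.zero _ => env
  | _ => lazymatch zmem t env with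
         | true => env
         | false => constr:(cons t env)
         end
  end.

Ltac zindex x env :=
  lazymatch env with
  | cons x _ => constr:(0%N)
  | cons _ ?env' => let k := zindex x env' in constr:(S k)
  end.

Ltac zreify t env :=
  lazymatch t with
  | @GRing.add _ ?a ?b =>
      let ra := zreify a env in let rb := zreify b env in constr:(ZAdd ra rb)
  | @GRing.opp _ ?a => let ra := zreify a env in constr:(ZOpp ra)
  | @GRing.zero _ => constr:(ZZero)
  | _ => let k := zindex t env in constr:(ZAtom k)
  end.

(* Proves a goal  t = 0  that holds in every abelian group, treating every
   subterm other than +, - and 0 as an atom. *)
Ltac zmod_zero :=
  lazymatch goal with
  | |- ?t = 0 =>
    let V := type of t in
    let env := zatoms t (@nil V) in
    let rt := zreify t env in
    change (zeval env rt = 0); apply: zeval_eq0; vm_compute; reflexivity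
  end.

Lemma morph_add0 (U W : zmodType) (f : U -> W) : {morph f : x y / x + y} -> f 0 = 0.
Proof. by move=> fD; apply: (addrI (f 0)); rewrite -fD !addr0. Qed.

Lemma morph_addN (U W : zmodType) (f : U -> W) :
  {morph f : x y / x + y} -> {morph f : x / - x}.
Proof. by move=> fD x; apply/eqP; rewrite -addr_eq0 -fD addNr (morph_add0 fD). Qed.

(* The Nijenhuis concomitant for an arbitrary bracket on an abelian group;
   [nijenhuis c] of the Courant algebroid is [nij (dorf c)]. *)
Definition nij (V : zmodType) (b : V -> V -> V) (F G : V -> V) (X Y : V) : V :=
  b (F X) (G Y) - F (b X (G Y)) - G (b (F X) Y) + F (G (b X Y))
  + b (G X) (F Y) - G (b X (F Y)) - F (b (G X) Y) + G (F (b X Y)).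

Section TwistingIdentities.
Variables (V : zmodType) (b : V -> V -> V) (I J : V -> V).
Hypotheses (bDl : forall z, {morph b^~ z : x y / x + y})
  (bDr : forall z, {morph b z : x y / x + y})
  (ID : {morph I : x y / x + y}) (JD : {morph J : x y / x + y})
  (II : forall x, I (I x) = - x) (JJ : forall x, J (J x) = - x)
  (IJ : forall x, I (J x) = - J (I x)).

Local Notation K := (fun x => I (J x)).
Local Notation N := (nij b).

Let bNl z : {morph b^~ z : x / - x}. Proof. exact: morph_addN. Qed.
Let bNr z : {morph b z : x / - x}. Proof. exact: morph_addN. Qed.
Let b0l z : b 0 z = 0. Proof. exact: morph_add0 (bDl z). Qed.
Let b0r z : b z 0 = 0. Proof. exact: morph_add0 (bDr z). Qed.
Let IN : {morph I : x / - x}. Proof. exact: morph_addN. Qed.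
Let JN : {morph J : x / - x}. Proof. exact: morph_addN. Qed.
Let I0 : I 0 = 0. Proof. exact: morph_add0. Qed.
Let J0 : J 0 = 0. Proof. exact: morph_add0. Qed.
Let JI x : J (I x) = - I (J x). Proof. by rewrite IJ opprK. Qed.

(* Proves an equation between two expressions built from b, I, J, sums and
   natural multiples: expand by additivity, reduce words in I, J to the form
   +-I^a J^b with a, b <= 1, and decide the resulting abelian-group identity. *)
Local Ltac twisting :=
  apply/eqP; rewrite -subr_eq0; apply/eqP;
  rewrite /nij ?mulrS ?mulr0n;
  rewrite ?(ID, IN, I0, JD, JN, J0, bDl, bNl, b0l, bDr, bNr, b0r, II, JJ, JI,
            opprK, oppr0);
  zmod_zero.

Lemma nijenhuis_KK X Y :
  N K K X Y *+ 2 =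
    N I I X Y - J (N I I X (J Y)) - J (N I I (J X) Y) + N I I (J X) (J Y)
  + N J J X Y - I (N J J X (I Y)) - I (N J J (I X) Y) + N J J (I X) (I Y).
Proof. twisting. Qed.

Lemma nijenhuis_JK X Y :
  N J K X Y *+ 4 =
    I (N I I (J X) (J Y) - N I I X Y + N J J X Y - N J J (I X) (I Y))
  + K (N I I X (J Y)) + K (N I I (J X) Y) - N J J X (I Y) - N J J (I X) Y.
Proof. twisting. Qed.

Lemma nijenhuis_KI X Y :
  N K I X Y *+ 4 =
    J (N I I (J X) (J Y) - N I I X Y + N J J X Y - N J J (I X) (I Y))
  + N I I X (J Y) + N I I (J X) Y + K (N J J X (I Y)) + K (N J J (I X) Y).
Proof. twisting. Qed.

Lemma twisted_nijenhuis_vanish :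
  (forall X Y, N I I X Y = 0) -> (forall X Y, N J J X Y = 0) ->
  forall X Y, [/\ N K K X Y *+ 2 = 0, N J K X Y *+ 4 = 0 & N K I X Y *+ 4 = 0].
Proof.
move=> nII nJJ X Y.
rewrite nijenhuis_KK nijenhuis_JK nijenhuis_KI !nII !nJJ.
by split; rewrite ?(I0, J0, subr0, addr0).
Qed.

Lemma anticommuting_square x : I (J (I (J x))) = - x.
Proof. by rewrite JI IN II opprK JJ. Qed.

End TwistingIdentities.

Lemma natmul_cancel (R : numFieldType) (C : lalgType R) (V : lmodType C)
    (n : nat) (x : V) :
  x *+ n.+1 = 0 -> x = 0.
Proof.
move=> /(congr1 (fun v => ((n.+1%:R : R)^-1)%:A *: v)).
rewrite scaler0 -scalerMnr !scalerMnl -mulr_natr mulVf ?pnatr_eq0 //.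
by rewrite !scale1r.
Qed.

Section CourantAlgebroid.
Variables (R : realFieldType) (C : comAlgType R) (V : lmodType C).
Variables (c : courant_data V) (hc : courant_axioms c).

Lemma dorf_addl z : {morph dorf c ^~ z : x y / x + y}.
Proof.
case: hc => _ [_ [_ [_ [_ [_ [dorfZl _]]]]]] x y.
by have := dorfZl 1 x y z; rewrite !scale1r.
Qed.

Lemma dorf_addr z : {morph dorf c z : x y / x + y}.
Proof.
case: hc => _ [_ [_ [_ [_ [_ [_ [dorfZr _]]]]]]] x y.
by have := dorfZr 1 z x y; rewrite !scale1r.
Qed.

End CourantAlgebroid.

Lemma bundle_endo_add (R : realFieldType) (C : comAlgType R) (V : lmodType C)
    (F : V -> V) :
  bundle_endo F -> {morph F : x y / x + y}.
Proof. by move=> eF x y; rewrite -[x]scale1r eF !scale1r. Qed.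

Lemma bundle_endo_comp (R : realFieldType) (C : comAlgType R) (V : lmodType C)
    (F G : V -> V) :
  bundle_endo F -> bundle_endo G -> bundle_endo (fun x => F (G x)).
Proof. by move=> eF eG f x y; rewrite eG eF. Qed.

Lemma ca_orthogonal_comp (R : realFieldType) (C : comAlgType R) (V : lmodType C)
    (c : courant_data V) (F G : V -> V) :
  ca_orthogonal c F -> ca_orthogonal c G -> ca_orthogonal c (fun x => F (G x)).
Proof. by move=> oF oG x y; rewrite oF oG. Qed.

Theorem mainTheorem10 (R : realFieldType) (C : comAlgType R) (V : lmodType C)
  (c : courant_data V) (hc : courant_axioms c) (I J : V -> V) :
  bundle_endo I -> bundle_endo J ->
  (forall x, I (I x) = - x) -> (forall x, J (J x) = - x) ->
  (forall x, I (J x) = - J (I x)) ->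
  ca_orthogonal c I -> ca_orthogonal c J ->
  nij_zero c I I -> nij_zero c J J -> nij_zero c I J ->
  hypercomplex c I J (fun x => I (J x)).
Proof.
move=> eI eJ II JJ IJ oI oJ nII nJJ nIJ.
have ID := bundle_endo_add eI; have JD := bundle_endo_add eJ.
have K2 := anticommuting_square ID II JJ IJ.
have vanish := twisted_nijenhuis_vanish (dorf_addl hc) (dorf_addr hc)
  ID JD II JJ IJ nII nJJ.
split; split; split => //.
- exact: bundle_endo_comp.
- exact: ca_orthogonal_comp.
- by move=> X Y; apply: (natmul_cancel (R := R) (n := 1)); case: (vanish X Y).
- by move=> X Y; apply: (natmul_cancel (R := R) (n := 3)); case: (vanish X Y).
- by move=> X Y; apply: (natmul_cancel (R := R) (n := 3)); case: (vanish X Y).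
Qed.
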